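(* Let $X$ be a set and $\{d_r\colon X\times X\to\mathbb{R}_{\ge0}\cup\{\infty\}\}_{r>0}$ a family satisfying the weaker $\{d_r\}$-axioms (see context). Then there exists a quasi-pseudo-metric $d$ on $X$ such that the quasi-uniformity induced by $d$ equals the quasi-uniformity $\mathcal U$ induced by $\{d_r\}_{r>0}$. Moreover, if $\{d_r\}_{r>0}$ is non-degenerate, i.e. $d_r(x,y)=0$ for all $r>0$ implies $x=y$, then $d$ can be chosen to be a quasi-metric.
   Context: The weaker $\{d_r\}$-axioms, required for all $x,y,z\in X$: (Self-distance) $d_r(x,x)=0$ for all $r>0$. (Upper semi-continuity) if $r_1\le r_2$ then $d_{r_1}(x,y)\le d_{r_2}(x,y)$; and if $d_r(x,y)<\varepsilon$ there is $\delta>0$ with $d_{r+\delta}(x,y)<\varepsilon$. (Weaker triangle inequality) for $r_1,r_2,r_3>0$, if $d_{r_1+r_2+r_3}(x,y)<r_3$ and $d_{r_1+r_2+r_3}(y,z)<r_2$, then $d_{r_1}(x,z)\le d_{r_1+r_2+r_3}(x,y)+d_{r_1+r_2+r_3}(y,z)$. The quasi-uniformity $\mathcal U$ induced by $\{d_r\}$ consists of all $U\subset X\times X$ containing $\{(x,y)\mid d_r(x,y)<\varepsilon\}$ for some $r,\varepsilon>0$. A quasi-pseudo-metric is a function $d\colon X\times X\to\mathbb{R}_{\ge0}$ with $d(x,x)=0$ and $d(x,z)\le d(x,y)+d(y,z)$ for all $x,y,z$ (not necessarily symmetric); it is a quasi-metric if moreover $d(x,y)=0$ implies $x=y$. The quasi-uniformity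 induced by $d$ consists of all $U\subset X\times X$ containing $\{(x,y)\mid d(x,y)<\varepsilon\}$ for some $\varepsilon>0$. *)

From Stdlib Require Import Reals.
From Coquelicot Require Import Rbar.
Open Scope R_scope.

(* A family {d_r}_{r>0} : X x X -> [0, +oo] is represented as
   dr : R -> X -> X -> Rbar; only values at r > 0 are ever used. *)

Definition dr_nonneg {X : Type} (dr : R -> X -> X -> Rbar) : Prop :=
  forall r x y, 0 < r -> Rbar_le (Finite 0) (dr r x y).

Definition dr_self_distance {X : Type} (dr : R -> X -> X -> Rbar) : Prop :=
  forall r x, 0 < r -> dr r x x = Finite 0.

Definition dr_upper_semicont {X : Type} (dr : R -> X -> X -> Rbar) : Prop :=
  (forall r1 r2 x y, 0 < r1 -> r1 <= r2 -> Rbar_le (dr r1 x y) (dr r2 x y)) /\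
  (forall r eps x y, 0 < r -> Rbar_lt (dr r x y) (Finite eps) ->
     exists delta, 0 < delta /\ Rbar_lt (dr (r + delta) x y) (Finite eps)).

Definition dr_weaker_triangle {X : Type} (dr : R -> X -> X -> Rbar) : Prop :=
  forall r1 r2 r3 x y z, 0 < r1 -> 0 < r2 -> 0 < r3 ->
    Rbar_lt (dr (r1 + r2 + r3) x y) (Finite r3) ->
    Rbar_lt (dr (r1 + r2 + r3) y z) (Finite r2) ->
    Rbar_le (dr r1 x z) (Rbar_plus (dr (r1 + r2 + r3) x y) (dr (r1 + r2 + r3) y z)).

Definition weaker_dr_axioms {X : Type} (dr : R -> X -> X -> Rbar) : Prop :=
  dr_nonneg dr /\ dr_self_distance dr /\ dr_upper_semicont dr /\ dr_weaker_triangle dr.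

Definition dr_nondegenerate {X : Type} (dr : R -> X -> X -> Rbar) : Prop :=
  forall x y, (forall r, 0 < r -> dr r x y = Finite 0) -> x = y.

Definition quniformity_dr {X : Type} (dr : R -> X -> X -> Rbar)
  (U : X * X -> Prop) : Prop :=
  exists r eps, 0 < r /\ 0 < eps /\
    forall x y, Rbar_lt (dr r x y) (Finite eps) -> U (x, y).

Definition quasi_pseudo_metric {X : Type} (d : X -> X -> R) : Prop :=
  (forall x y, 0 <= d x y) /\ (forall x, d x x = 0) /\
  (forall x y z, d x z <= d x y + d y z).

Definition quasi_metric {X : Type} (d : X -> X -> R) : Prop :=
  quasi_pseudo_metric d /\ (forall x y, d x y = 0 -> x = y).

Definition quniformity_d {X : Type} (d : X -> X -> R) (U : X * X -> Prop) : Prop :=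
  exists eps, 0 < eps /\ forall x y, d x y < eps -> U (x, y).

(* Let U_0 be everything and U_n (n >= 1) the relation d_n(x,y) < 4^-n.  The
   U_n decrease, are reflexive, and the weaker triangle inequality, applied
   twice, gives U_(n+1) o U_(n+1) o U_(n+1) ⊆ U_n.  Frink's chain construction
   then produces a quasi-pseudo-metric: d(x,y) is the infimum of sum_i 2^-k_i
   over chains x = x_0, ..., x_m = y with (x_(i-1), x_i) in U_(k_i).  A chain of
   weight at most 2^-(n+1) splits around one link into two chains of weight at
   most 2^-(n+2), which yields {d < 2^-(n+1)} ⊆ U_n ⊆ {d ≤ 2^-n}.  So d and
   {d_r} induce the same quasi-uniformity, and d(x,y) = 0 puts (x,y) in every
   U_n, hence d_r(x,y) = 0 for all r. *)

From Stdlib Require Import Reals.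
From Coquelicot Require Import Rbar.
Open Scope R_scope.
From Stdlib Require Import Lra Lia List Wf_nat Classical.
From Coquelicot Require Import Lub.

Lemma pow_le_antitone (q : R) (j k : nat) :
  0 <= q <= 1 -> (j <= k)%nat -> q ^ k <= q ^ j.
Proof.
  intros Hq Hjk. induction Hjk as [|k _ IH]; [lra|].
  simpl. assert (0 <= q ^ k) by (apply pow_le; lra). nra.
Qed.

Lemma pow_tends_0 (q eps : R) :
  0 <= q < 1 -> 0 < eps -> exists N, forall n, (N <= n)%nat -> q ^ n < eps.
Proof.
  intros Hq Heps.
  destruct (pow_lt_1_zero q ltac:(rewrite Rabs_pos_eq; lra) eps Heps) as [N HN].
  exists N. intros n Hn. specialize (HN n Hn).
  rewrite Rabs_pos_eq in HN; [exact HN | apply pow_le; lra].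
Qed.

Lemma half_pow_le_exponent (k n : nat) : (/2) ^ k <= (/2) ^ S n -> (S n <= k)%nat.
Proof.
  intros H. destruct (Compare_dec.le_lt_dec (S n) k) as [Hle|Hlt]; [exact Hle|].
  assert ((/2) ^ n <= (/2) ^ k) by (apply pow_le_antitone; [lra|lia]).
  assert (0 < (/2) ^ n) by (apply pow_lt; lra).
  simpl in H. lra.
Qed.

Section ChainDistance.

Variable X : Type.
Variable U : nat -> X -> X -> Prop.

Fixpoint is_chain (x : X) (l : list (nat * X)) : Prop :=
  match l with
  | nil => True
  | (k, y) :: l' => U k x y /\ is_chain y l'
  end.

Fixpoint chain_end (x : X) (l : list (nat * X)) : X :=
  match l with
  | nil => x
  | (_, y) :: l' => chain_end y l'
  end.

Fixpoint chain_weight (l : list (nat * X)) : R :=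
  match l with
  | nil => 0
  | (k, _) :: l' => (/2) ^ k + chain_weight l'
  end.

Lemma chain_weight_nonneg l : 0 <= chain_weight l.
Proof.
  induction l as [|[k y] l IH]; simpl; [lra|].
  assert (0 <= (/2) ^ k) by (apply pow_le; lra). lra.
Qed.

Lemma chain_weight_app l1 l2 : chain_weight (l1 ++ l2) = chain_weight l1 + chain_weight l2.
Proof. induction l1 as [|[k y] l IH]; simpl; [|rewrite IH]; lra. Qed.

Lemma is_chain_app x l1 l2 :
  is_chain x (l1 ++ l2) <-> is_chain x l1 /\ is_chain (chain_end x l1) l2.
Proof. revert x; induction l1 as [|[k y] l IH]; intros x; simpl; [|rewrite IH]; tauto. Qed.

Lemma chain_end_app x l1 l2 : chain_end x (l1 ++ l2) = chain_end (chain_end x l1) l2.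
Proof. revert x; induction l1 as [|[k y] l IH]; intros x; simpl; auto. Qed.

Lemma chain_split l c1 c2 :
  l <> nil -> 0 <= c1 -> 0 <= c2 -> chain_weight l <= c1 + c2 ->
  exists l1 a l2, l = l1 ++ a :: l2 /\ chain_weight l1 <= c1 /\ chain_weight l2 <= c2.
Proof.
  revert c1. induction l as [|[k y] l IH]; intros c1 Hne H1 H2 Hw; [congruence|].
  destruct (Rle_dec (chain_weight l) c2) as [Hl|Hl].
  - exists nil, (k, y), l. simpl. repeat split; auto; lra.
  - assert (Hne' : l <> nil) by (intros ->; simpl in Hl; lra).
    simpl in Hw.
    destruct (IH (c1 - (/2) ^ k) Hne') as (l1 & a & l2 & -> & Hw1 & Hw2); try lra.
    exists ((k, y) :: l1), a, l2. simpl. repeat split; auto; lra.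
Qed.

Definition chain_weights (x y : X) (t : R) : Prop :=
  exists l, is_chain x l /\ chain_end x l = y /\ chain_weight l = t.

Definition chain_dist (x y : X) : R := real (Glb_Rbar (chain_weights x y)).

Hypothesis U_total0 : forall x y, U 0 x y.

Lemma chain_weights_glb_ge0 x y : Rbar_le 0 (Glb_Rbar (chain_weights x y)).
Proof.
  apply (proj2 (Glb_Rbar_correct _)).
  intros t (l & _ & _ & <-). apply chain_weight_nonneg.
Qed.

Lemma chain_weights_glb_finite x y :
  Glb_Rbar (chain_weights x y) = Finite (chain_dist x y).
Proof.
  unfold chain_dist.
  assert (Hle1 : Rbar_le (Glb_Rbar (chain_weights x y)) 1).
  { apply (proj1 (Glb_Rbar_correct _)).
    exists ((0%nat, y) :: nil). simpl. repeat split; auto; lra. }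
  assert (Hge0 := chain_weights_glb_ge0 x y).
  destruct (Glb_Rbar (chain_weights x y)); simpl in *; tauto.
Qed.

Lemma chain_dist_nonneg x y : 0 <= chain_dist x y.
Proof.
  assert (H := chain_weights_glb_ge0 x y).
  rewrite chain_weights_glb_finite in H. exact H.
Qed.

Lemma chain_dist_le_weight x l : is_chain x l -> chain_dist x (chain_end x l) <= chain_weight l.
Proof.
  intros Hc.
  assert (H := proj1 (Glb_Rbar_correct (chain_weights x (chain_end x l)))
                 (chain_weight l) (ex_intro _ l (conj Hc (conj eq_refl eq_refl)))).
  rewrite chain_weights_glb_finite in H. exact H.
Qed.

Lemma chain_dist_lt x y t :
  chain_dist x y < t -> exists l, is_chain x l /\ chain_end x l = y /\ chain_weight l < t.
Proof.
  intros Ht. apply NNPP. intros Hnone.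
  assert (H : Rbar_le t (Glb_Rbar (chain_weights x y))).
  { apply (proj2 (Glb_Rbar_correct _)). intros s (l & Hc & He & <-).
    apply Rnot_lt_le. intros Hlt. apply Hnone. exists l. auto. }
  rewrite chain_weights_glb_finite in H. simpl in H. lra.
Qed.

Lemma chain_dist_quasi_pseudo_metric : quasi_pseudo_metric chain_dist.
Proof.
  split; [|split].
  - apply chain_dist_nonneg.
  - intros x. apply Rle_antisym; [|apply chain_dist_nonneg].
    apply (chain_dist_le_weight x nil). exact I.
  - intros x y z. apply Rnot_lt_le. intros H.
    set (e := (chain_dist x z - chain_dist x y - chain_dist y z) / 2).
    destruct (chain_dist_lt x y (chain_dist x y + e)) as (l1 & Hc1 & <- & Hw1); [unfold e; lra|].
    destruct (chain_dist_lt (chain_end x l1) z (chain_dist (chain_end x l1) z + e)) as (l2 & Hc2 & <- & Hw2);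
      [unfold e; lra|].
    assert (Hd := chain_dist_le_weight x (l1 ++ l2)).
    rewrite is_chain_app, chain_end_app, chain_weight_app in Hd.
    specialize (Hd (conj Hc1 Hc2)). unfold e in *; lra.
Qed.

Lemma entourage_chain_dist_le n x y : U n x y -> chain_dist x y <= (/2) ^ n.
Proof.
  intros Hxy.
  assert (H := chain_dist_le_weight x ((n, y) :: nil) (conj Hxy I)).
  simpl in H. lra.
Qed.

Hypothesis U_refl : forall n x, U n x x.
Hypothesis U_antitone : forall j k x y, (j <= k)%nat -> U k x y -> U j x y.
Hypothesis U_compose3 :
  forall n x y z w, U (S n) x y -> U (S n) y z -> U (S n) z w -> U n x w.

Lemma chain_small_weight_entourage n x l :
  is_chain x l -> chain_weight l <= (/2) ^ S n -> U n x (chain_end x l).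
Proof.
  revert n x. induction l as [l IH] using (induction_ltof1 _ (@length _)).
  intros n x Hc Hw. destruct l as [|p l']; [apply U_refl|].
  set (c := (/2) ^ S (S n)).
  assert (Hc0 : 0 <= c) by (apply pow_le; lra).
  destruct (chain_split (p :: l') c c ltac:(discriminate) Hc0 Hc0)
    as (l1 & [k y] & l2 & E & Hw1 & Hw2).
  { unfold c. simpl in Hw |- *. lra. }
  rewrite E in Hc, Hw |- *.
  assert (Hshorter : forall l, (length l <= length l1 + length l2)%nat ->
                               ltof _ (@length _) l (p :: l')).
  { intros l Hl. unfold ltof. rewrite E, length_app. simpl. lia. }
  rewrite chain_weight_app in Hw. simpl in Hw.
  apply is_chain_app in Hc as (Hc1 & Hk & Hc2).
  rewrite chain_end_app. simpl.
  apply U_compose3 with (chain_end x l1) y.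
  - apply IH; [apply Hshorter; lia | exact Hc1 | exact Hw1].
  - apply U_antitone with k; [|exact Hk].
    apply half_pow_le_exponent.
    assert (0 <= chain_weight l1) by apply chain_weight_nonneg.
    assert (0 <= chain_weight l2) by apply chain_weight_nonneg.
    simpl. lra.
  - apply IH; [apply Hshorter; lia | exact Hc2 | exact Hw2].
Qed.

Lemma chain_dist_lt_entourage n x y : chain_dist x y < (/2) ^ S n -> U n x y.
Proof.
  intros Hd. destruct (chain_dist_lt x y _ Hd) as (l & Hc & <- & Hw).
  apply chain_small_weight_entourage; [exact Hc | lra].
Qed.

Lemma chain_dist_eq0 x y : chain_dist x y = 0 -> forall n, U n x y.
Proof.
  intros H0 n. apply chain_dist_lt_entourage. rewrite H0. apply pow_lt. lra.
Qed.

Lemma quniformity_chain_dist V :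
  quniformity_d chain_dist V <-> exists n, forall x y, U n x y -> V (x, y).
Proof.
  split.
  - intros (eps & Heps & HV).
    destruct (pow_tends_0 (/2) eps ltac:(lra) Heps) as [n Hn].
    exists n. intros x y Hxy. apply HV.
    apply Rle_lt_trans with ((/2) ^ n); [apply entourage_chain_dist_le, Hxy | apply Hn; lia].
  - intros (n & HV). exists ((/2) ^ S n). split; [apply pow_lt; lra|].
    intros x y Hxy. apply HV, chain_dist_lt_entourage, Hxy.
Qed.

End ChainDistance.

Definition dr_entourage {X : Type} (dr : R -> X -> X -> Rbar) (n : nat) (x y : X) : Prop :=
  match n with
  | O => True
  | S _ => Rbar_lt (dr (INR n) x y) ((/4) ^ n)
  end.

Section DrEntourages.

Variable X : Type.
Variable dr : R -> X -> X -> Rbar.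

Hypothesis dr_ge0 : dr_nonneg dr.
Hypothesis dr_self : dr_self_distance dr.
Hypothesis dr_mono :
  forall r1 r2 x y, 0 < r1 -> r1 <= r2 -> Rbar_le (dr r1 x y) (dr r2 x y).
Hypothesis dr_tri : dr_weaker_triangle dr.

Lemma dr_triangle_lt r1 r2 r3 x y z :
  0 < r1 -> 0 < r2 -> 0 < r3 ->
  Rbar_lt (dr (r1 + r2 + r3) x y) r3 -> Rbar_lt (dr (r1 + r2 + r3) y z) r2 ->
  Rbar_lt (dr r1 x z) (r3 + r2).
Proof.
  intros H1 H2 H3 Hxy Hyz.
  apply Rbar_le_lt_trans with (Rbar_plus (dr (r1 + r2 + r3) x y) (dr (r1 + r2 + r3) y z)).
  - apply dr_tri; assumption.
  - exact (Rbar_plus_lt_compat _ _ _ _ Hxy Hyz).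
Qed.

Lemma dr_compose3 r e x y z w :
  0 < e -> 5 * e < r ->
  Rbar_lt (dr r x y) e -> Rbar_lt (dr r y z) e -> Rbar_lt (dr r z w) e ->
  Rbar_lt (dr (r - 5 * e) x w) (3 * e).
Proof.
  intros He Hr Hxy Hyz Hzw.
  assert (Hxz : Rbar_lt (dr (r - 2 * e) x z) (e + e)).
  { apply dr_triangle_lt with y; try lra;
      replace (r - 2 * e + e + e) with r by ring; assumption. }
  assert (Hzw' : Rbar_lt (dr (r - 2 * e) z w) e).
  { apply Rbar_le_lt_trans with (dr r z w); [apply dr_mono; lra | exact Hzw]. }
  replace (3 * e) with (e + e + e) by ring.
  apply dr_triangle_lt with z; try lra;
    replace (r - 5 * e + e + (e + e)) with (r - 2 * e) by ring; assumption.
Qed.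

Lemma dr_entourage_refl n x : dr_entourage dr n x x.
Proof.
  destruct n as [|n]; [exact I|]. unfold dr_entourage.
  rewrite dr_self; [apply pow_lt; lra | apply lt_0_INR; lia].
Qed.

Lemma dr_entourage_antitone j k x y :
  (j <= k)%nat -> dr_entourage dr k x y -> dr_entourage dr j x y.
Proof.
  destruct j as [|j]; [constructor|].
  destruct k as [|k]; [lia|]. unfold dr_entourage. intros Hjk H.
  eapply Rbar_le_lt_trans; [apply dr_mono|eapply Rbar_lt_le_trans; [exact H|]].
  - apply lt_0_INR. lia.
  - apply le_INR. exact Hjk.
  - apply pow_le_antitone; [lra | exact Hjk].
Qed.

Lemma dr_entourage_compose3 n x y z w :
  dr_entourage dr (S n) x y -> dr_entourage dr (S n) y z -> dr_entourage dr (S n) z w ->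
  dr_entourage dr n x w.
Proof.
  destruct n as [|n]; [constructor|]. unfold dr_entourage.
  intros Hxy Hyz Hzw.
  set (e := (/4) ^ S (S n)) in *.
  assert (He : e = /16 * (/4) ^ n) by (unfold e; simpl; field).
  assert (Hpow : 0 < (/4) ^ n <= 1).
  { split; [apply pow_lt; lra|]. rewrite <- (pow_O (/4)). apply pow_le_antitone; [lra|lia]. }
  assert (Hr : INR (S (S n)) = INR (S n) + 1) by apply S_INR.
  assert (Hn : 0 < INR (S n)) by (apply lt_0_INR; lia).
  apply Rbar_le_lt_trans with (dr (INR (S (S n)) - 5 * e) x w).
  - apply dr_mono; lra.
  - apply Rbar_lt_le_trans with (3 * e).
    + apply dr_compose3 with y z; auto; lra.
    + change (3 * e <= /4 * (/4) ^ n). lra.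
Qed.

Lemma dr_entourage_small r eps :
  0 < r -> 0 < eps -> exists n, forall x y, dr_entourage dr n x y -> Rbar_lt (dr r x y) eps.
Proof.
  intros Hr Heps.
  destruct (pow_tends_0 (/4) eps ltac:(lra) Heps) as [N1 HN1].
  destruct (INR_unbounded r) as [N2 HN2].
  exists (S (Nat.max N1 N2)). intros x y Hxy.
  eapply Rbar_le_lt_trans; [apply dr_mono|eapply Rbar_lt_le_trans; [exact Hxy|]].
  - exact Hr.
  - assert (INR N2 <= INR (S (Nat.max N1 N2))) by (apply le_INR; lia). lra.
  - apply Rlt_le, HN1. lia.
Qed.

Lemma quniformity_dr_entourage V :
  quniformity_dr dr V <-> exists n, forall x y, dr_entourage dr n x y -> V (x, y).
Proof.
  split.
  - intros (r & eps & Hr & Heps & HV).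
    destruct (dr_entourage_small r eps Hr Heps) as [n Hn].
    exists n. intros x y Hxy. apply HV, Hn, Hxy.
  - intros (n & HV). exists (INR (S n)), ((/4) ^ S n).
    split; [apply lt_0_INR; lia|]. split; [apply pow_lt; lra|].
    intros x y Hxy. apply HV, dr_entourage_antitone with (S n); [lia | exact Hxy].
Qed.

Lemma dr_entourage_all_eq0 x y r :
  (forall n, dr_entourage dr n x y) -> 0 < r -> dr r x y = Finite 0.
Proof.
  intros Hall Hr.
  assert (Hsmall : forall eps, 0 < eps -> Rbar_lt (dr r x y) eps).
  { intros eps Heps. destruct (dr_entourage_small r eps Hr Heps) as [n Hn]. apply Hn, Hall. }
  assert (Hge0 := dr_ge0 r x y Hr).
  specialize (Hsmall 1 Rlt_0_1) as H1.
  destruct (dr r x y) as [a| |]; simpl in Hge0, H1; try tauto.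
  f_equal. apply Rle_antisym; [|exact Hge0].
  apply Rnot_lt_le. intros Ha. specialize (Hsmall a Ha). simpl in Hsmall. lra.
Qed.

End DrEntourages.

Theorem theorem4p10 (X : Type) (dr : R -> X -> X -> Rbar) :
  weaker_dr_axioms dr ->
  (exists d : X -> X -> R, quasi_pseudo_metric d /\
     (forall U : X * X -> Prop, quniformity_d d U <-> quniformity_dr dr U)) /\
  (dr_nondegenerate dr ->
   exists d : X -> X -> R, quasi_metric d /\
     (forall U : X * X -> Prop, quniformity_d d U <-> quniformity_dr dr U)).
Proof.
  intros (Hge0 & Hself & [Hmono _] & Htri).
  set (U := dr_entourage dr).
  assert (Htotal : forall x y, U 0%nat x y) by (intros; exact I).
  assert (Hrefl := dr_entourage_refl X dr Hself).
  assert (Hanti := dr_entourage_antitone X dr Hmono).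
  assert (Hcomp := dr_entourage_compose3 X dr Hmono Htri).
  set (d := chain_dist X U).
  assert (Hqpm : quasi_pseudo_metric d) by exact (chain_dist_quasi_pseudo_metric X U Htotal).
  assert (Huniform : forall V, quniformity_d d V <-> quniformity_dr dr V).
  { intros V. unfold d.
    rewrite (quniformity_chain_dist X U Htotal Hrefl Hanti Hcomp),
      quniformity_dr_entourage by exact Hmono.
    reflexivity. }
  split; [exists d; auto|].
  intros Hnd. exists d. split; [split; [exact Hqpm|] | exact Huniform].
  intros x y H0. apply Hnd. intros r Hr.
  apply (dr_entourage_all_eq0 X dr Hge0 Hmono); [|exact Hr].
  exact (chain_dist_eq0 X U Htotal Hrefl Hanti Hcomp x y H0).
Qed.
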